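(* Let $M$ be a monoidal category, $C$ an $M$-actegory and $x,y\in C$. Every 2-cell $\theta:R_x\Rightarrow R_y$ in $\mathit{Tamb}_{C,M}$ is of the form $R_f$ for a unique morphism $f\in C(x,y)$. Similarly, every 2-cell $\theta:L_y\Rightarrow L_x$ in $\mathit{Tamb}_{M,C}$ is of the form $L_f$ for a unique $f\in C(x,y)$.
   Context: $(M,\otimes,I,\lambda,a)$ is a monoidal category; an $M$-actegory is a category $C$ with a functor $\odot:M\times C\to C$ and coherent natural isomorphisms $\lambda_x:I\odot x\to x$, $a_{m,n,x}:(m\otimes n)\odot x\to m\odot(n\odot x)$; $M$ is an $M$-actegory via $\otimes$. Composition is diagrammatic. For $M$-actegories $C,D$, $\mathit{Tamb}_{C,D}$ is the category of functors $P:C^{op}\times D\to\mathrm{Set}$ equipped with strength maps $P(c,d)\to P(m\odot c,m\odot d)$ natural in $c,d$, (di)natural in $m$ and compatible with unitors/associators, with morphisms (2-cells) the strength-preserving natural transformations. For $x\in C$, $R_x\in\mathit{Tamb}_{C,M}$ is $(c,n)\mapsto C(c,n\odot x)$ with strength $h\mapsto(m\odot h);a^{-1}_{m,n,x}$, and $L_x\in\mathit{Tamb}_{M,C}$ is $(n,c)\mapsto C(n\odot x,c)$ with strength $h\mapsto a_{m,n,x};(m\odot h)$. For $f:x\to y$ in $C$, $R_f:R_x\Rightarrow R_y$ is postcomposition with $n\odot f$, and $L_f:L_y\Rightarrow L_x$ is precomposition with $n\odot f$. *)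

(* plain Rocq, no library needed.  Categories, monoidal
   categories, actegories and Tambara modules are defined from scratch.
   Composition is DIAGRAMMATIC:  f >>> g  means "first f, then g". *)

Record Category := mkCat {
  Ob :> Type;
  Hom : Ob -> Ob -> Type;
  idm : forall a, Hom a a;
  comp : forall a b c, Hom a b -> Hom b c -> Hom a c;
  comp_idl : forall a b (f : Hom a b), comp a a b (idm a) f = f;
  comp_idr : forall a b (f : Hom a b), comp a b b f (idm b) = f;
  comp_assoc : forall a b c d (f : Hom a b) (g : Hom b c) (h : Hom c d),
      comp a c d (comp a b c f g) h = comp a b d f (comp b c d g h)
}.
Arguments Hom {c} a b : rename.
Arguments idm {c} a : rename.
Arguments comp {c0 a b c} f g : rename.
Notation "f >>> g" := (comp f g) (at level 40, left associativity).

Record Monoidal := mkMon {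
  MC :> Category;
  tens : MC -> MC -> MC;
  tensm : forall a a' b b', Hom a a' -> Hom b b' -> Hom (tens a b) (tens a' b');
  tens_id : forall a b, tensm a a b b (idm a) (idm b) = idm (tens a b);
  tens_comp : forall a a' a'' b b' b'' (f : Hom a a') (f' : Hom a' a'')
      (g : Hom b b') (g' : Hom b' b''),
      tensm _ _ _ _ (f >>> f') (g >>> g') = tensm _ _ _ _ f g >>> tensm _ _ _ _ f' g';
  munit : MC;
  lam : forall a, Hom (tens munit a) a;
  lam_inv : forall a, Hom a (tens munit a);
  lam_iso1 : forall a, lam a >>> lam_inv a = idm _;
  lam_iso2 : forall a, lam_inv a >>> lam a = idm _;
  lam_nat : forall a b (f : Hom a b),
      tensm _ _ _ _ (idm munit) f >>> lam b = lam a >>> f;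
  rho : forall a, Hom (tens a munit) a;
  rho_inv : forall a, Hom a (tens a munit);
  rho_iso1 : forall a, rho a >>> rho_inv a = idm _;
  rho_iso2 : forall a, rho_inv a >>> rho a = idm _;
  rho_nat : forall a b (f : Hom a b),
      tensm _ _ _ _ f (idm munit) >>> rho b = rho a >>> f;
  asc : forall a b c, Hom (tens (tens a b) c) (tens a (tens b c));
  asc_inv : forall a b c, Hom (tens a (tens b c)) (tens (tens a b) c);
  asc_iso1 : forall a b c, asc a b c >>> asc_inv a b c = idm _;
  asc_iso2 : forall a b c, asc_inv a b c >>> asc a b c = idm _;
  asc_nat : forall a a' b b' c c' (f : Hom a a') (g : Hom b b') (h : Hom c c'),
      tensm _ _ _ _ (tensm _ _ _ _ f g) h >>> asc a' b' c'
      = asc a b c >>> tensm _ _ _ _ f (tensm _ _ _ _ g h);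
  pentagon : forall a b c d,
      asc (tens a b) c d >>> asc a b (tens c d)
      = tensm _ _ _ _ (asc a b c) (idm d) >>> asc a (tens b c) d
        >>> tensm _ _ _ _ (idm a) (asc b c d);
  triangle : forall a b,
      asc a munit b >>> tensm _ _ _ _ (idm a) (lam b) = tensm _ _ _ _ (rho a) (idm b)
}.
Arguments tens {m} a b.
Arguments tensm {m a a' b b'} f g.
Arguments munit m : assert.
Arguments lam {m} a.
Arguments lam_inv {m} a.
Arguments rho {m} a.
Arguments asc {m} a b c.
Arguments asc_inv {m} a b c.

Record Actegory (M : Monoidal) := mkAct {
  AC :> Category;
  act : M -> AC -> AC;
  actm : forall m m' x x', Hom m m' -> Hom x x' -> Hom (act m x) (act m' x');
  act_id : forall m x, actm m m x x (idm m) (idm x) = idm (act m x);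
  act_comp : forall m m' m'' x x' x'' (f : Hom m m') (f' : Hom m' m'')
      (g : Hom x x') (g' : Hom x' x''),
      actm _ _ _ _ (f >>> f') (g >>> g') = actm _ _ _ _ f g >>> actm _ _ _ _ f' g';
  alam : forall x, Hom (act (munit M) x) x;
  alam_inv : forall x, Hom x (act (munit M) x);
  alam_iso1 : forall x, alam x >>> alam_inv x = idm _;
  alam_iso2 : forall x, alam_inv x >>> alam x = idm _;
  alam_nat : forall x y (f : Hom x y),
      actm _ _ _ _ (idm (munit M)) f >>> alam y = alam x >>> f;
  aasc : forall m n x, Hom (act (tens m n) x) (act m (act n x));
  aasc_inv : forall m n x, Hom (act m (act n x)) (act (tens m n) x);
  aasc_iso1 : forall m n x, aasc m n x >>> aasc_inv m n x = idm _;
  aasc_iso2 : forall m n x, aasc_inv m n x >>> aasc m n x = idm _;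
  aasc_nat : forall m m' n n' x x' (f : Hom m m') (g : Hom n n') (h : Hom x x'),
      actm _ _ _ _ (tensm f g) h >>> aasc m' n' x'
      = aasc m n x >>> actm _ _ _ _ f (actm _ _ _ _ g h);
  apentagon : forall m n p x,
      aasc (tens m n) p x >>> aasc m n (act p x)
      = actm _ _ _ _ (asc m n p) (idm x) >>> aasc m (tens n p) x
        >>> actm _ _ _ _ (idm m) (aasc n p x);
  atriangle : forall m x,
      aasc m (munit M) x >>> actm _ _ _ _ (idm m) (alam x)
      = actm _ _ _ _ (rho m) (idm x)
}.
Arguments AC {M} a.
Arguments act {M s} m x : rename.
Arguments actm {M s m m' x x'} f g : rename.
Arguments alam {M s} x : rename.
Arguments alam_inv {M s} x : rename.
Arguments aasc {M s} m n x : rename.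
Arguments aasc_inv {M s} m n x : rename.

(* The structure maps of an M-action (data only), used to state the
   Tambara axioms uniformly for C and for M acting on itself via ⊗. *)
Record ActStruct (M : Monoidal) (C : Category) := mkActStruct {
  as_ob : M -> C -> C;
  as_hom : forall m m' c c', Hom m m' -> Hom c c' -> Hom (as_ob m c) (as_ob m' c');
  as_lam : forall c, Hom (as_ob (munit M) c) c;
  as_lam_inv : forall c, Hom c (as_ob (munit M) c);
  as_asc : forall m n c, Hom (as_ob (tens m n) c) (as_ob m (as_ob n c));
  as_asc_inv : forall m n c, Hom (as_ob m (as_ob n c)) (as_ob (tens m n) c)
}.
Arguments as_ob {M C} s m c : rename.
Arguments as_hom {M C} s {m m' c c'} f g : rename.
Arguments as_lam {M C} s c : rename.
Arguments as_lam_inv {M C} s c : rename.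
Arguments as_asc {M C} s m n c : rename.
Arguments as_asc_inv {M C} s m n c : rename.

Definition act_struct {M : Monoidal} (A : Actegory M) : ActStruct M A :=
  mkActStruct M A (@act M A) (@actm M A) (@alam M A) (@alam_inv M A)
    (@aasc M A) (@aasc_inv M A).

Definition reg_struct (M : Monoidal) : ActStruct M M :=
  mkActStruct M M (@tens M) (@tensm M) (@lam M) (@lam_inv M)
    (@asc M) (@asc_inv M).

Record TambData (M : Monoidal) (C D : Category)
       (SC : ActStruct M C) (SD : ActStruct M D) := mkTamb {
  tprof : C -> D -> Type;
  tmap : forall c c' d d', Hom c' c -> Hom d d' -> tprof c d -> tprof c' d';
  tst : forall m c d, tprof c d -> tprof (as_ob SC m c) (as_ob SD m d)
}.
Arguments TambData {M C D} SC SD.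
Arguments tprof {M C D SC SD} t c d.
Arguments tmap {M C D SC SD} t {c c' d d'} f g p.
Arguments tst {M C D SC SD} t m {c d} p.

Definition IsTambara {M : Monoidal} {C D : Category}
    {SC : ActStruct M C} {SD : ActStruct M D} (P : TambData SC SD) : Prop :=
  (forall c d (p : tprof P c d), tmap P (idm c) (idm d) p = p) /\
  (forall c c' c'' d d' d'' (f : Hom c' c) (f' : Hom c'' c') (g : Hom d d')
      (g' : Hom d' d'') (p : tprof P c d),
      tmap P (f' >>> f) (g >>> g') p = tmap P f' g' (tmap P f g p)) /\
  (forall m c c' d d' (f : Hom c' c) (g : Hom d d') (p : tprof P c d),
      tst P m (tmap P f g p)
      = tmap P (as_hom SC (idm m) f) (as_hom SD (idm m) g) (tst P m p)) /\
  (forall m m' (u : Hom m m') c d (p : tprof P c d),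
      tmap P (idm _) (as_hom SD u (idm d)) (tst P m p)
      = tmap P (as_hom SC u (idm c)) (idm _) (tst P m' p)) /\
  (forall c d (p : tprof P c d),
      tmap P (as_lam_inv SC c) (as_lam SD d) (tst P (munit M) p) = p) /\
  (forall m n c d (p : tprof P c d),
      tmap P (as_asc_inv SC m n c) (as_asc SD m n d) (tst P (tens m n) p)
      = tst P m (tst P n p)).

Definition IsTamb2Cell {M : Monoidal} {C D : Category}
    {SC : ActStruct M C} {SD : ActStruct M D} (P Q : TambData SC SD)
    (theta : forall c d, tprof P c d -> tprof Q c d) : Prop :=
  (forall c c' d d' (f : Hom c' c) (g : Hom d d') (p : tprof P c d),
      theta c' d' (tmap P f g p) = tmap Q f g (theta c d p)) /\
  (forall m c d (p : tprof P c d),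
      theta _ _ (tst P m p) = tst Q m (theta c d p)).

Section Representables.
Context {M : Monoidal} (A : Actegory M).

Definition Rrep (x : A) : TambData (act_struct A) (reg_struct M) :=
  mkTamb M A M (act_struct A) (reg_struct M)
    (fun (c : A) (n : M) => Hom c (act n x))
    (fun c c' n n' (f : Hom c' c) (g : Hom n n') (h : Hom c (act n x)) =>
       f >>> h >>> actm g (idm x))
    (fun m c n (h : Hom c (act n x)) => actm (idm m) h >>> aasc_inv m n x).

Definition Lrep (x : A) : TambData (reg_struct M) (act_struct A) :=
  mkTamb M M A (reg_struct M) (act_struct A)
    (fun (n : M) (c : A) => Hom (act n x) c)
    (fun n n' c c' (g : Hom n' n) (f : Hom c c') (h : Hom (act n x) c) =>
       actm g (idm x) >>> h >>> f)
    (fun m n c (h : Hom (act n x) c) => aasc m n x >>> actm (idm m) h).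

Definition Rmor {x y : A} (f : Hom x y) :
    forall c n, tprof (Rrep x) c n -> tprof (Rrep y) c n :=
  fun c n h => h >>> actm (idm n) f.

Definition Lmor {x y : A} (f : Hom x y) :
    forall n c, tprof (Lrep y) n c -> tprof (Lrep x) n c :=
  fun n c h => actm (idm n) f >>> h.

End Representables.


(* By naturality (Yoneda), a 2-cell [theta : R_x => R_y] is determined by its
   values [theta (n ⊙ x) n id] on identities.  Strength at the unit object,
   followed by [rho_n ⊙ x] and the actegory triangle, rewrites each of these
   as [n ⊙ f] for the single morphism [f := theta x I (λ_x^-1) ; λ_y], so
   [theta = R_f]; and [f] is recovered from [R_f] in the same way, giving
   uniqueness.  The case of [L] is dual. *)

Section ActegoryFacts.
Context {M : Monoidal} (A : Actegory M).

Lemma actm_idm_comp (m : M) (a b c : A) (g : Hom a b) (g' : Hom b c) :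
  actm (idm m) (g >>> g') = actm (idm m) g >>> actm (idm m) g'.
Proof. rewrite <- act_comp, comp_idl. reflexivity. Qed.

Lemma actm_aasc_inv_rho (n : M) (c z : A) (h : Hom c (act (munit M) z)) :
  actm (idm n) h >>> aasc_inv n (munit M) z >>> actm (rho n) (idm z)
  = actm (idm n) (h >>> alam z).
Proof.
  rewrite <- atriangle, comp_assoc, <- (comp_assoc _ _ _ _ _ (aasc_inv _ _ _)).
  rewrite aasc_iso2, comp_idl, actm_idm_comp. reflexivity.
Qed.

Lemma actm_rho_inv_aasc (n : M) (z c : A) (h : Hom (act (munit M) z) c) :
  actm (rho_inv M n) (idm z) >>> aasc n (munit M) z >>> actm (idm n) h
  = actm (idm n) (alam_inv z >>> h).
Proof.
  assert (rho_inv_aasc : actm (rho_inv M n) (idm z) >>> aasc n (munit M) z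
                         = actm (idm n) (alam_inv z)).
  { transitivity (actm (rho_inv M n) (idm z) >>> aasc n (munit M) z
       >>> (actm (idm n) (alam z) >>> actm (idm n) (alam_inv z))).
    - rewrite <- actm_idm_comp, alam_iso1, act_id, comp_idr. reflexivity.
    - rewrite <- comp_assoc, (comp_assoc _ _ _ _ _ _ _ (actm (idm n) (alam z))).
      rewrite atriangle, <- act_comp, rho_iso2, comp_idl, act_id, comp_idl.
      reflexivity. }
  rewrite rho_inv_aasc, actm_idm_comp. reflexivity.
Qed.

Lemma Rmor_unit_component (x y : A) (f : Hom x y) :
  Rmor A f x (munit M) (alam_inv x) >>> alam y = f.
Proof.
  unfold Rmor. rewrite comp_assoc, alam_nat, <- comp_assoc, alam_iso2, comp_idl.
  reflexivity.
Qed.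

Lemma Lmor_unit_component (x y : A) (f : Hom x y) :
  alam_inv x >>> Lmor A f (munit M) y (alam y) = f.
Proof.
  unfold Lmor. rewrite alam_nat, <- comp_assoc, alam_iso2, comp_idl.
  reflexivity.
Qed.

End ActegoryFacts.

Section RCells.
Context {M : Monoidal} (A : Actegory M) (x y : A).
Variable theta : forall c n, tprof (Rrep A x) c n -> tprof (Rrep A y) c n.
Hypothesis theta_cell : IsTamb2Cell (Rrep A x) (Rrep A y) theta.

Definition Rcell_hom : Hom x y := theta x (munit M) (alam_inv x) >>> alam y.

Lemma Rcell_precomp (c : A) (n : M) (h : Hom c (act n x)) :
  theta c n h = h >>> theta (act n x) n (idm _).
Proof.
  destruct theta_cell as [natural _].
  pose proof (natural _ _ _ _ h (idm n) (idm _)) as H; cbn in H.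
  rewrite !act_id, !comp_idr in H. exact H.
Qed.

Lemma Rcell_at_idm (n : M) :
  theta (act n x) n (idm _) = actm (idm n) Rcell_hom.
Proof.
  destruct theta_cell as [natural strong].
  pose proof (strong n x (munit M) (alam_inv x)) as Hst; cbn in Hst.
  pose proof (natural _ _ _ _ (idm _) (rho n)
    (actm (idm n) (alam_inv x) >>> aasc_inv n (munit M) x)) as Hnat; cbn in Hnat.
  rewrite !comp_idl, actm_aasc_inv_rho, alam_iso2, act_id, Hst,
    actm_aasc_inv_rho in Hnat.
  exact Hnat.
Qed.

Lemma Rcell_eq_Rmor (c : A) (n : M) (h : Hom c (act n x)) :
  theta c n h = Rmor A Rcell_hom c n h.
Proof. rewrite Rcell_precomp, Rcell_at_idm. reflexivity. Qed.

End RCells.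

Section LCells.
Context {M : Monoidal} (A : Actegory M) (x y : A).
Variable theta : forall n c, tprof (Lrep A y) n c -> tprof (Lrep A x) n c.
Hypothesis theta_cell : IsTamb2Cell (Lrep A y) (Lrep A x) theta.

Definition Lcell_hom : Hom x y := alam_inv x >>> theta (munit M) y (alam y).

Lemma Lcell_postcomp (n : M) (c : A) (h : Hom (act n y) c) :
  theta n c h = theta n (act n y) (idm _) >>> h.
Proof.
  destruct theta_cell as [natural _].
  pose proof (natural _ _ _ _ (idm n) h (idm _)) as H; cbn in H.
  rewrite !act_id, !comp_idl in H. exact H.
Qed.

Lemma Lcell_at_idm (n : M) :
  theta n (act n y) (idm _) = actm (idm n) Lcell_hom.
Proof.
  destruct theta_cell as [natural strong].
  pose proof (strong n (munit M) y (alam y)) as Hst; cbn in Hst.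
  pose proof (natural _ _ _ _ (rho n) (idm _) (idm _)) as Hnat; cbn in Hnat.
  rewrite atriangle in Hst. rewrite !comp_idr, Hst in Hnat.
  unfold Lcell_hom. rewrite <- actm_rho_inv_aasc, comp_assoc, Hnat,
    <- comp_assoc, <- act_comp, rho_iso2, comp_idl, act_id, comp_idl.
  reflexivity.
Qed.

Lemma Lcell_eq_Lmor (n : M) (c : A) (h : Hom (act n y) c) :
  theta n c h = Lmor A Lcell_hom n c h.
Proof. rewrite Lcell_postcomp, Lcell_at_idm. reflexivity. Qed.

End LCells.

Theorem mainTheorem6 (M : Monoidal) (A : Actegory M) (x y : A) :
  (forall theta : forall c n, tprof (Rrep A x) c n -> tprof (Rrep A y) c n,
      IsTamb2Cell (Rrep A x) (Rrep A y) theta ->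
      exists! f : Hom x y, forall c n h, theta c n h = Rmor A f c n h)
  /\
  (forall theta : forall n c, tprof (Lrep A y) n c -> tprof (Lrep A x) n c,
      IsTamb2Cell (Lrep A y) (Lrep A x) theta ->
      exists! f : Hom x y, forall n c h, theta n c h = Lmor A f n c h).
Proof.
  split; intros theta theta_cell.
  - exists (Rcell_hom A x y theta). split.
    + exact (Rcell_eq_Rmor A x y theta theta_cell).
    + intros f Hf. rewrite <- (Rmor_unit_component A x y f), <- Hf. reflexivity.
  - exists (Lcell_hom A x y theta). split.
    + exact (Lcell_eq_Lmor A x y theta theta_cell).
    + intros f Hf. rewrite <- (Lmor_unit_component A x y f), <- Hf. reflexivity.
Qed.
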